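(* For every positive integer $n$, the numerical semigroup $$S_n=\langle 15,\ 15+2^{n+2},\ 15+2^{n+2}+2^{n+1},\ 15+2^{n+2}+2^{n+1}+2^n\rangle$$ has embedding dimension four, is almost symmetric of type three, and $$\mathrm{PF}(S_n)=\{15+2^{n+3},\ 2(15+2^{n+3}),\ 3(15+2^{n+3})\}.$$
   Context: $\mathrm{PF}(S)$ is the set of integers $f\notin S$ with $f+s\in S$ for all $s\in S\setminus\{0\}$; the type is $|\mathrm{PF}(S)|$; $S$ is almost symmetric if $2|\mathbb{N}\setminus S|=F(S)+|\mathrm{PF}(S)|$, where $F(S)=\max(\mathbb{Z}\setminus S)$. *)

From HB Require Import structures.
From mathcomp Require Import all_boot all_order all_algebra.
Set Implicit Arguments. Unset Strict Implicit. Unset Printing Implicit Defensive.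
Import Order.TTheory GRing.Theory Num.Theory.
Local Open Scope ring_scope.

Definition sg (A : seq nat) (x : int) : Prop :=
  exists c : seq nat, size c = size A /\
    x = ((\sum_(i < size A) nth 0 c i * nth 0 A i)%N)%:Z.

Definition PF (S : int -> Prop) (f : int) : Prop :=
  ~ S f /\ forall s, S s -> s <> 0 -> S (f + s).

Definition is_frobenius (S : int -> Prop) (F : int) : Prop :=
  ~ S F /\ forall x, F < x -> S x.

Definition is_genus (S : int -> Prop) (g : nat) : Prop :=
  exists s : seq int, uniq s /\ size s = g /\
    forall x, x \in s <-> (0 <= x /\ ~ S x).

Definition is_type (S : int -> Prop) (t : nat) : Prop :=
  exists s : seq int, uniq s /\ size s = t /\
    forall f, f \in s <-> PF S f.

Definition almost_symmetric (S : int -> Prop) : Prop :=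
  exists (F : int) (g t : nat),
    is_frobenius S F /\ is_genus S g /\ is_type S t /\ (2 * g%:Z = F + t%:Z).

Definition min_gen (S : int -> Prop) (x : int) : Prop :=
  S x /\ x <> 0 /\ ~ (exists a b, S a /\ S b /\ a <> 0 /\ b <> 0 /\ x = a + b).

Definition is_embdim (S : int -> Prop) (e : nat) : Prop :=
  exists s : seq int, uniq s /\ size s = e /\
    forall x, x \in s <-> min_gen S x.

Definition Sn (n : nat) : seq nat :=
  [:: 15; 15 + 2 ^ n.+2; 15 + 2 ^ n.+2 + 2 ^ n.+1;
      15 + 2 ^ n.+2 + 2 ^ n.+1 + 2 ^ n]%N.

From mathcomp Require Import all_boot all_algebra.
From mathcomp Require Import zify.

(* With m = 2^n the generators are 15 + m * g for the weights g = 0, 4, 6, 7,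
   and everything is proved in Section [Semigroup] for any m coprime to 15.
   An element of S_m is 15 N + m W with W = 4j + 6k + 7l and j + k + l <= N.
   As m is invertible mod 15, the element determines W mod 15; a table gives,
   for each class w, the least weight wmin w in it and the least length lmin w
   realising it (minimality is checked by computation).  So the Apery set of
   S_m with respect to 15 is {ap w = 15 lmin w + m wmin w | w < 15}, and
   y lies in S_m iff y >= ap (class of y) (lemma [inSP]).  From it we read off
   - the Frobenius number ap 9 - 15 = 45 + 24m and the genus
     sum_w ap w / 15 = 24 + 12m (Selmer's formulas);
   - the pseudo-Frobenius numbers: ap w - 15 for the classes w = 1, 8, 9,
     the maximal elements of the Apery set, i.e. a, 2a, 3a with a = 15 + 8m;
   - the minimality of the four generators, by a weight count mod 15.
   Hence 2g = 48 + 24m = F + 3: S_m is almost symmetric of type three, and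
   the theorem is the case m = 2^n. *)

Definition weights : seq nat := [:: 0; 4; 6; 7].

Definition gens (m : nat) : seq nat := [seq 15 + m * g | g <- weights].

Definition weight (j k l : nat) : nat := 4 * j + 6 * k + 7 * l.

(* For each residue w < 15, the triple (j, k, l) of least weight
   4j + 6k + 7l congruent to w mod 15, and of least length j + k + l
   among those of that weight. *)
Definition apery_rep : seq (nat * nat * nat) :=
  [:: (0,0,0); (1,2,0); (1,1,1); (0,3,0); (1,0,0); (0,1,2); (0,1,0); (0,0,1);
      (2,0,0); (0,4,0); (1,1,0); (1,0,1); (0,2,0); (0,1,1); (0,0,2)].

Definition wmin (w : nat) : nat :=
  let: (j, k, l) := nth (0, 0, 0) apery_rep w in weight j k l.

Definition lmin (w : nat) : nat :=
  let: (j, k, l) := nth (0, 0, 0) apery_rep w in j + k + l.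

Lemma wmin_rep w : exists j k l, weight j k l = wmin w /\ j + k + l = lmin w.
Proof. by rewrite /wmin /lmin; case: (nth _ _ w) => [[j k] l]; exists j, k, l. Qed.

Lemma wmin_mod w : w < 15 -> wmin w %% 15 = w.
Proof. by do 15 (case: w => [//|w]); rewrite !ltnS ltn0. Qed.

Lemma wmin_le w : wmin w <= 24.
Proof. by do 15 (case: w => [//|w]); case: w. Qed.

Lemma lmin_le w : lmin w <= 4.
Proof. by do 15 (case: w => [//|w]); case: w. Qed.

(* It suffices to check lengths below 6, since longer triples weigh >= 24. *)
Definition minimal_at (j k l : nat) : bool :=
  let W := weight j k l in
  (wmin (W %% 15) <= W) && ((W == wmin (W %% 15)) ==> (lmin (W %% 15) <= j + k + l)).

Lemma minimal_small :
  all (fun j => all (fun k => all (minimal_at j k) (iota 0 6)) (iota 0 6)) (iota 0 6).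
Proof. by vm_compute. Qed.

Lemma weight_minimal j k l : let W := weight j k l in
  wmin (W %% 15) <= W /\ (W = wmin (W %% 15) -> lmin (W %% 15) <= j + k + l).
Proof.
move=> W; have [long|short] := leqP 6 (j + k + l).
  have := wmin_le (W %% 15); have := lmin_le (W %% 15); rewrite /W /weight.
  by split=> [|_]; lia.
have mem6 x : x <= j + k + l -> x \in iota 0 6 by rewrite mem_iota; lia.
move/allP: minimal_small => /(_ j (mem6 j ltac:(lia))).
move=> /allP /(_ k (mem6 k ltac:(lia))) /allP /(_ l (mem6 l ltac:(lia))).
by case/andP=> -> /implyP sharp; split=> // /eqP; apply: sharp.
Qed.

Lemma leq_mod15 a b : a = b %[mod 15] -> a < b + 15 -> a <= b.
Proof. by move=> eq_ab; have := divn_eq a 15; have := divn_eq b 15; rewrite eq_ab; lia. Qed.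

Definition units15 : seq nat := [:: 1; 2; 4; 7; 8; 11; 13; 14].

Lemma units_mod15 u : coprime u 15 -> u %% 15 \in units15.
Proof.
have table : all (fun r => coprime r 15 ==> (r \in units15)) (iota 0 15) by [].
rewrite -coprime_modl => cop; move/allP: table => /(_ (u %% 15)).
by rewrite mem_iota ltn_mod cop => /(_ isT).
Qed.

Section Semigroup.

Variable m : nat.
Hypothesis m_coprime : coprime m 15.

Lemma m_gt0 : 0 < m.
Proof. by rewrite lt0n; apply: contraTneq m_coprime => ->. Qed.

Lemma m_pow4 : m ^ 4 %% 15 = 1.
Proof.
have table : all (fun u => u ^ 4 %% 15 == 1) units15 by [].
by rewrite -modnXm; apply/eqP/(allP table)/units_mod15.
Qed.

(* Membership in S_m: y = 15 * N + m * (4j + 6k + 7l) with j + k + l <= N,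
   i.e. N - (j + k + l) copies of 15 plus j, k, l copies of the other three
   generators. *)
Definition inS (y : nat) : Prop :=
  exists N j k l, j + k + l <= N /\ y = 15 * N + m * weight j k l.

(* The residue mod 15 of the weight of y: since m ^ 4 = 1 (mod 15),
   m ^ 3 inverts m modulo 15. *)
Definition resid (y : nat) : nat := (m ^ 3 * y) %% 15.

(* The Apery element of the class w: the least element of S_m of weight
   residue w, i.e. the least element of S_m congruent to m * w mod 15. *)
Definition ap (w : nat) : nat := 15 * lmin w + m * wmin w.

Lemma resid_lt y : resid y < 15.
Proof. exact: ltn_mod. Qed.

Lemma residE N W : resid (15 * N + m * W) = W %% 15.
Proof.
rewrite /resid mulnDr (mulnCA _ 15) mulnC modnMDl.
by rewrite mulnA -expnSr -modnMml m_pow4 mul1n.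
Qed.

Lemma resid_congr y z : y = z %[mod 15] -> resid y = resid z.
Proof. by move=> eq_yz; rewrite /resid -modnMmr eq_yz modnMmr. Qed.

Lemma resid_inj y z : resid y = resid z -> y = z %[mod 15].
Proof.
have inv x : x = m * resid x %[mod 15].
  by rewrite /resid modnMmr mulnA -expnS -modnMml m_pow4 mul1n.
by move=> eq_r; rewrite (inv y) (inv z) eq_r.
Qed.

Lemma resid_ap w : w < 15 -> resid (ap w) = w.
Proof. by move=> lt_w; rewrite residE wmin_mod. Qed.

Lemma ap_congr y : ap (resid y) = y %[mod 15].
Proof. by apply: resid_inj; rewrite resid_ap // resid_lt. Qed.

Lemma inSP y : inS y <-> ap (resid y) <= y.
Proof.
split=> [[N [j [k [l [le_len ->]]]]]|le_ap].
  rewrite residE /ap; have [le_wt sharp] := weight_minimal j k l.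
  move: le_wt sharp; set W := weight j k l; set w := W %% 15 => le_wt sharp.
  have le_len_min := lmin_le w.
  have [eq_W|ne_W] := eqVneq W (wmin w).
    by have := sharp eq_W; rewrite eq_W; lia.
  (* A heavier weight exceeds the least one by at least 15, and then
     j + k + l >= 3 since each generator weighs at most 7. *)
  have le15 : wmin w + 15 <= W.
    by apply: leq_mod15; [rewrite modnDr wmin_mod ?ltn_mod | lia].
  have len3 : 3 <= j + k + l by move: le15; rewrite /W /weight; lia.
  have : m * (wmin w + 15) <= m * W by rewrite leq_mul2l le15 orbT.
  by rewrite mulnDr; have := m_gt0; lia.
have [j [k [l [eq_W eq_len]]]] := wmin_rep (resid y).
have /dvdnP[q eq_q] : 15 %| y - ap (resid y).
  by rewrite -eqn_mod_dvd // ap_congr.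
exists (lmin (resid y) + q), j, k, l; split; first lia.
by rewrite eq_W; move: eq_q le_ap; rewrite /ap; lia.
Qed.

Lemma inS_lin N W : inS (15 * N + m * W) <-> ap (W %% 15) <= 15 * N + m * W.
Proof. by rewrite inSP residE. Qed.

Lemma inS_add y z : inS y -> inS z -> inS (y + z).
Proof.
move=> [N1 [j1 [k1 [l1 [le1 ->]]]]] [N2 [j2 [k2 [l2 [le2 ->]]]]].
exists (N1 + N2), (j1 + j2), (k1 + k2), (l1 + l2); split; first lia.
by rewrite /weight !mulnDr; lia.
Qed.

Lemma inS_gen g : g \in weights -> inS (15 + m * g).
Proof.
rewrite !inE => /or4P[] /eqP->;
  [exists 1, 0, 0, 0 | exists 1, 1, 0, 0 | exists 1, 0, 1, 0 | exists 1, 0, 0, 1];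
  by rewrite /weight muln0.
Qed.

Lemma inS_dec y : inS y -> y <> 0 ->
  exists g z, [/\ g \in weights, inS z & y = 15 + m * g + z].
Proof.
move=> [N [j [k [l [le_len ->]]]]] y_ne0.
have rest j' k' l' : j' + k' + l' <= N.-1 -> inS (15 * N.-1 + m * weight j' k' l').
  by exists N.-1, j', k', l'.
have N_gt0 : 0 < N.
  rewrite lt0n; apply/eqP => N0; apply: y_ne0; move: le_len.
  by rewrite N0 leqn0 !addn_eq0 => /andP[/andP[/eqP-> /eqP->] /eqP->]; rewrite /weight !(muln0, addn0).
clear y_ne0; have [short|full] := ltnP (j + k + l) N.
  exists 0, (15 * N.-1 + m * weight j k l); split=> //; first by apply: rest; lia.
  by rewrite muln0; lia.
case: j le_len full => [|j] le_len full.
  case: k le_len full => [|k] le_len full.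
    case: l le_len full => [|l] le_len full; first lia.
    exists 7, (15 * N.-1 + m * weight 0 0 l); split=> //; first by apply: rest; lia.
    by rewrite /weight !mulnDr; lia.
  exists 6, (15 * N.-1 + m * weight 0 k l); split=> //; first by apply: rest; lia.
  by rewrite /weight !mulnDr; lia.
exists 4, (15 * N.-1 + m * weight j k l); split=> //; first by apply: rest; lia.
by rewrite /weight !mulnDr; lia.
Qed.

Lemma gapP y : ~ inS y <-> y < ap (resid y).
Proof. by rewrite inSP ltnNge; split=> [/negP|/negP]. Qed.

Lemma gap_le y : ~ inS y -> y + 15 <= ap (resid y).
Proof.
move=> /gapP lt_y; apply: leq_mod15; last by lia.
by rewrite modnDr ap_congr.
Qed.

Lemma gap_below_ap y : ~ inS y -> inS (y + 15) -> y + 15 = ap (resid y).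
Proof.
move=> gap_y /inSP; have -> : resid (y + 15) = resid y.
  by apply: resid_congr; rewrite modnDr.
by have := gap_le y gap_y; lia.
Qed.

(* The Frobenius number is ap 9 - 15 = 45 + 24 m, ap 9 being the largest
   Apery element. *)
Lemma frobenius_nat : ~ inS (45 + 24 * m) /\ forall y, 45 + 24 * m < y -> inS y.
Proof.
split.
  have -> : 45 + 24 * m = 15 * 3 + m * 24 by lia.
  by rewrite inS_lin; change (24 %% 15) with 9; rewrite /ap /lmin /wmin /weight /=; lia.
move=> y lt_y; apply/inSP/leq_mod15; first exact: ap_congr.
have : ap (resid y) <= 60 + 24 * m.
  have := lmin_le (resid y); have : m * wmin (resid y) <= m * 24.
    by rewrite leq_mul2l wmin_le orbT.
  by rewrite /ap; lia.
lia.
Qed.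

Definition gaps : seq nat :=
  [seq ap w - 15 * q.+1 | w <- iota 0 15, q <- iota 0 (ap w %/ 15)].

Lemma resid_ap_sub w q : w < 15 -> q < ap w %/ 15 -> resid (ap w - 15 * q.+1) = w.
Proof.
move=> lt_w lt_q; rewrite -[RHS](resid_ap w lt_w); apply: resid_congr.
have := divn_eq (ap w) 15; have := divn_eq (ap w - 15 * q.+1) 15; lia.
Qed.

Lemma mem_gaps y : y \in gaps <-> ~ inS y.
Proof.
rewrite gapP; split.
  case/allpairsPdep=> [w [q [w_in q_in ->]]].
  move: w_in q_in; rewrite !mem_iota /= => lt_w lt_q; rewrite resid_ap_sub //.
  by have := divn_eq (ap w) 15; lia.
move=> lt_y; apply/allpairsPdep; exists (resid y), ((ap (resid y) - y) %/ 15).-1.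
have := gap_le y (proj2 (gapP y) lt_y); have := ap_congr y.
have := divn_eq y 15; have := divn_eq (ap (resid y)) 15.
have := divn_eq (ap (resid y) - y) 15.
rewrite !mem_iota resid_lt; split=> //; lia.
Qed.

Lemma uniq_gaps : uniq gaps.
Proof.
apply: allpairs_uniq_dep => [|w _|]; rewrite ?iota_uniq //.
move=> [w1 q1] [w2 q2] /allpairsPdep[w1' [q1' [w1_in q1_in [-> ->]]]].
move=> /allpairsPdep[w2' [q2' [w2_in q2_in [-> ->]]]] /= eq_gap.
move: w1_in q1_in w2_in q2_in; rewrite !mem_iota /= => lt_w1 lt_q1 lt_w2 lt_q2.
have eq_w : w1' = w2'.
  by rewrite -(resid_ap_sub w1' q1') // eq_gap resid_ap_sub.
move: eq_gap lt_q1; rewrite eq_w => eq_gap lt_q1.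
by have := divn_eq (ap w2') 15; have -> : q1' = q2' by lia.
Qed.

(* Selmer's formula: the genus is the sum over classes of ap w / 15. *)
Lemma size_gaps : size gaps = 24 + 12 * m.
Proof.
rewrite size_allpairs_dep (eq_map (fun w => size_iota 0 _)).
have := units_mod15 _ m_coprime; have := divn_eq m 15.
rewrite /ap /lmin /wmin /weight /= !inE.
move: (m %/ 15) (m %% 15) => q r ->.
by do ?[case/orP => /eqP ->]; lia.
Qed.

(* Adding the generator 15 + m * g to
   ap w - 15 gives 15 * lmin w + m * (wmin w + g), of class (wmin w + g) %% 15.
   [absorbs w g] is an m-independent sufficient condition for this element to
   lie above the Apery element of its class (so it is in S_m); [extends w g]
   says it is that Apery element minus 15 (so it is a gap). *)
Definition absorbs (w g : nat) : bool :=
  let v := (wmin w + g) %% 15 in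
  (wmin v <= wmin w + g) && (lmin v <= lmin w)
  || (wmin v + 15 <= wmin w + g) && (lmin v <= (lmin w).+1).

Definition extends (w g : nat) : bool :=
  let v := (wmin w + g) %% 15 in
  (wmin v == wmin w + g) && (lmin v == (lmin w).+1).

Lemma maximal_classes :
  all (fun w => if w \in [:: 1; 8; 9] then all (absorbs w) weights
                else has (extends w) weights) (iota 1 14).
Proof. by []. Qed.

Lemma absorbs_inS w g : absorbs w g -> inS (15 * lmin w + m * (wmin w + g)).
Proof.
rewrite /absorbs inS_lin /ap; set v := (wmin w + g) %% 15.
case/orP=> /andP[le_wt le_len].
  by apply: leq_add; rewrite leq_mul2l ?le_len ?le_wt orbT.
have : m * (wmin v + 15) <= m * (wmin w + g) by rewrite leq_mul2l le_wt orbT.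
have := m_gt0; lia.
Qed.

Lemma extends_notinS w g : extends w g -> ~ inS (15 * lmin w + m * (wmin w + g)).
Proof.
rewrite /extends inS_lin /ap; set v := (wmin w + g) %% 15.
by case/andP=> /eqP-> /eqP->; lia.
Qed.

Definition pfS (y : nat) : Prop :=
  ~ inS y /\ forall g, g \in weights -> inS (y + (15 + m * g)).

Lemma pfSP y : pfS y <-> exists2 w, w \in [:: 1; 8; 9] & y + 15 = ap w.
Proof.
have shift w g : y + 15 = ap w -> y + (15 + m * g) = 15 * lmin w + m * (wmin w + g).
  by rewrite /ap mulnDr; lia.
have table w : 0 < w < 15 -> if w \in [:: 1; 8; 9] then all (absorbs w) weights
                             else has (extends w) weights.
  by move=> w_range; apply: (allP maximal_classes); rewrite mem_iota; lia.
split=> [[gap_y above]|[w w_max eq_ap]].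
  have := above 0; rewrite muln0 addn0 inE eqxx => /(_ isT) in_y15.
  have eq_ap := gap_below_ap y gap_y in_y15.
  have w_gt0 : 0 < resid y.
    by rewrite lt0n; apply: contraPneq eq_ap => ->; rewrite /ap /lmin /wmin /weight /=; lia.
  have := table (resid y); rewrite w_gt0 resid_lt => /(_ isT).
  case: ifP => [w_max _|_ /hasP[g g_in ext]]; first by exists (resid y).
  by case: (extends_notinS _ _ ext); rewrite -shift //; apply: above.
have resid_y : resid y = w.
  have w_lt : w < 15 by move: w_max; rewrite !inE => /or3P[]/eqP->.
  by rewrite -(resid_ap w w_lt) -eq_ap; apply: resid_congr; rewrite modnDr.
split; first by rewrite gapP resid_y -eq_ap; lia.
move=> g g_in; rewrite (shift w) //; apply: absorbs_inS.
by move: w_max (table w); rewrite !inE => /or3P[]/eqP-> /(_ isT) /allP/(_ g g_in).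
Qed.

Lemma inS_pos y : inS y -> y <> 0 -> exists N W, y = 15 * N.+1 + m * W.
Proof.
move=> /inS_dec dec /dec[g [_ [_ [N [j [k [l [_ ->]]]]]] ->]].
by exists N, (g + weight j k l); rewrite mulnDr; lia.
Qed.

(* The generators are not sums of two nonzero elements: such a sum has
   at least 30 in its "15-part", hence a smaller weight, which is
   incompatible with the weight residue of the generator. *)
Lemma gen_indecomposable g y z : g \in weights -> inS y -> inS z ->
  y <> 0 -> z <> 0 -> 15 + m * g <> y + z.
Proof.
move=> g_in in_y in_z /(inS_pos y in_y)[Ny [Wy ->]] /(inS_pos z in_z)[Nz [Wz ->]] eq_g.
have lt_g : g < 15 by move: g_in; rewrite !inE => /or4P[]/eqP->.
have lt_W : Wy + Wz < g.
  rewrite -(ltn_pmul2l m_gt0) mulnDr; lia.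
have := residE 1 g; rewrite muln1 eq_g.
rewrite (_ : _ + _ = 15 * (Ny.+1 + Nz.+1) + m * (Wy + Wz)); last by rewrite !mulnDr; lia.
by rewrite residE !modn_small //; lia.
Qed.

Lemma sgP x : sg (gens m) x <-> exists2 y, x = Posz y & inS y.
Proof.
rewrite /sg /gens /=; split.
  move=> [c [_ ->]]; eexists; first reflexivity.
  rewrite !big_ord_recl big_ord0 /=.
  exists (nth 0 c 0 + nth 0 c 1 + nth 0 c 2 + nth 0 c 3), (nth 0 c 1), (nth 0 c 2), (nth 0 c 3).
  by split; rewrite /weight /bump /= ?addn0 ?add1n; lia.
move=> [y -> [N [j [k [l [le_len ->]]]]]].
exists [:: N - (j + k + l); j; k; l]; split=> //.
by rewrite !big_ord_recl big_ord0 /= /weight /bump /=; congr Posz; lia.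
Qed.

Lemma sg_natP y : sg (gens m) (Posz y) <-> inS y.
Proof. by rewrite sgP; split=> [[z [->]]|in_y] //; exists y. Qed.

(* Pseudo-Frobenius numbers are nonnegative (-15 fails the generator
   15 + 4m), and for those it suffices to test the generators, since every
   nonzero element of S_m is a generator plus an element of S_m. *)
Lemma PF_gens f : PF (sg (gens m)) f <-> exists2 y, f = Posz y & pfS y.
Proof.
have gen_in g : g \in weights -> sg (gens m) (Posz (15 + m * g)).
  by move=> g_in; apply/sg_natP/inS_gen.
split=> [[gap_f above]|[y -> [gap_y above]]]; last first.
  split=> [/sg_natP //|s /sgP[z -> in_z] z_ne0].
  have [g [z' [g_in in_z' ->]]] : exists g z', [/\ g \in weights, inS z' & z = 15 + m * g + z'].
    by apply: inS_dec => // z0; apply: z_ne0; rewrite z0.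
  by rewrite -PoszD addnA; apply/sg_natP/inS_add => //; apply: above.
case: f gap_f above => [y|k] gap_f above.
  exists y => //; split=> [/sg_natP //|g g_in].
  by apply/sg_natP; rewrite PoszD; apply: above; [apply: gen_in | lia].
have [y eq_y in_y] := proj1 (sgP _) (above _ (gen_in 0 (mem_head _ _)) ltac:(lia)).
have y0 : y = 0.
  apply/eqP/contraT => /eqP y_ne0.
  by have [N [W eq_yNW]] := inS_pos y in_y y_ne0; lia.
have := above _ (gen_in 4 isT) ltac:(lia).
have -> : (Negz k + Posz (15 + m * 4) = Posz (15 * 0 + m * 4))%R by lia.
by rewrite sg_natP inS_lin; change (4 %% 15) with 4; rewrite /ap /lmin /wmin /weight /=; lia.
Qed.

(* PF(S_m) = {a, 2a, 3a} with a = 15 + 8m = ap 8 - 15; indeed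
   ap 1 = 45 + 16m and ap 9 = 60 + 24m. *)
Lemma PF_gensP f : let a := Posz (15 + 8 * m) in
  PF (sg (gens m)) f <-> f = a \/ f = (2 * a)%R \/ f = (3 * a)%R.
Proof.
move=> a; rewrite PF_gens.
have ap_max : [/\ ap 1 = 45 + 16 * m, ap 8 = 30 + 8 * m & ap 9 = 60 + 24 * m].
  by rewrite /ap /lmin /wmin /weight /=; split; lia.
case: ap_max => ap1 ap8 ap9; split=> [[y -> /pfSP[w]]|].
  by rewrite !inE => /or3P[]/eqP->; rewrite ?ap1 ?ap8 ?ap9; lia.
case=> [->|[->|->]].
- by exists (15 + 8 * m); [lia | apply/pfSP; exists 8 => //; rewrite ap8; lia].
- by exists (30 + 16 * m); [lia | apply/pfSP; exists 1 => //; rewrite ap1; lia].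
- by exists (45 + 24 * m); [lia | apply/pfSP; exists 9 => //; rewrite ap9; lia].
Qed.

Lemma type_gens : is_type (sg (gens m)) 3.
Proof.
have := m_gt0; set a := Posz (15 + 8 * m) => m_gt0.
exists [:: a; (2 * a)%R; (3 * a)%R]; split; first by rewrite /= !inE; lia.
split=> // f; rewrite PF_gensP !inE.
split=> [/or3P[]/eqP->|[|[]]->]; rewrite ?eqxx ?orbT //.
- by left.
- by right; left.
- by right; right.
Qed.

Lemma min_gen_gens x :
  min_gen (sg (gens m)) x <-> exists2 g, g \in weights & x = Posz (15 + m * g).
Proof.
split=> [[/sgP[y -> in_y] [y_ne0 indec]]|[g g_in ->]].
  have [g [z [g_in in_z eq_y]]] := inS_dec y in_y (fun y0 => y_ne0 (congr1 Posz y0)).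
  subst y.
  exists g => //; have [->|z_ne0] := eqVneq z 0; first by rewrite addn0.
  case: indec; exists (Posz (15 + m * g)), (Posz z).
  by rewrite !sg_natP PoszD; split; [exact: inS_gen | split=> //; lia].
split; first exact/sg_natP/inS_gen.
split=> [|[s [t [/sgP[y -> in_y] [/sgP[z -> in_z] [y_ne0 [z_ne0 eq_g]]]]]]]; first lia.
by apply: (gen_indecomposable g y z) => //; lia.
Qed.

Lemma embdim_gens : is_embdim (sg (gens m)) 4.
Proof.
have := m_gt0 => m_gt0.
exists [seq Posz (15 + m * g) | g <- weights]; split; first by rewrite /= !inE; lia.
split=> // x; rewrite min_gen_gens; split=> [/mapP[g g_in ->]|[g g_in ->]].
  by exists g.
exact: map_f.
Qed.

Lemma frobenius_gens : is_frobenius (sg (gens m)) (Posz (45 + 24 * m)).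
Proof.
have [gap_F above] := frobenius_nat.
split=> [/sg_natP //|[y|k] lt_F]; last by lia.
by apply/sg_natP/above; lia.
Qed.

Lemma genus_gens : is_genus (sg (gens m)) (24 + 12 * m).
Proof.
have Posz_inj : injective Posz by move=> y z [].
exists [seq Posz y | y <- gaps]; split; first by rewrite map_inj_uniq ?uniq_gaps.
split=> [|[y|k]]; first by rewrite size_map size_gaps.
  by rewrite mem_map // mem_gaps sg_natP; split=> [|[]].
by split=> [/mapP[y _] //|[]]; lia.
Qed.

Lemma almost_symmetric_gens : almost_symmetric (sg (gens m)).
Proof.
exists (Posz (45 + 24 * m)), (24 + 12 * m), 3; split; first exact: frobenius_gens.
split; first exact: genus_gens.
by split; [exact: type_gens | lia].
Qed.

End Semigroup.

Lemma Sn_gens n : Sn n = gens (2 ^ n).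
Proof. by rewrite /Sn /gens /= !expnS; congr [:: _; _; _; _]; lia. Qed.

Local Open Scope ring_scope.

Theorem mainTheorem9 (n : nat) (hn : (0 < n)%N) :
  let S := sg (Sn n) in
  let a : int := (15 + 2 ^ n.+3)%N%:Z in
  is_embdim S 4 /\ almost_symmetric S /\ is_type S 3 /\
  (forall f : int, PF S f <-> (f = a \/ f = 2 * a \/ f = 3 * a)).
Proof.
move=> S a.
have m_coprime : coprime (2 ^ n) 15 by apply: coprimeXl.
have -> : a = Posz (15 + 8 * 2 ^ n) by rewrite /a !expnS; congr Posz; lia.
rewrite /S Sn_gens; split; first exact: embdim_gens.
split; first exact: almost_symmetric_gens.
split; first exact: type_gens.
exact: PF_gensP.
Qed.
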